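(* Every interval graph admits a canonical dominating set.
   Context: A graph $G$ is an interval graph if there are closed intervals $I_v$, $v\in V(G)$, with $uv\in E(G)$ iff $I_u\cap I_v\ne\emptyset$. A set $D\subseteq V(G)$ is a dominating set if every vertex of $G$ is in $D$ or adjacent to a vertex of $D$. Two dominating sets $D,D'$ are adjacent if $|D\triangle D'|=1$. For dominating sets $D_p,D_q$ and an integer $k>0$, write $D_p\leftrightarrow_k D_q$ if there is a sequence $D_0=D_p,\dots,D_\ell=D_q$ ($\ell\ge0$) of dominating sets of $G$ with consecutive sets adjacent and $|D_i|\le k$ for all $i$. A minimum dominating set $D^*$ of $G$ is canonical if $D\leftrightarrow_{|D|+1} D^*$ for every dominating set $D$ of $G$. *)

From Stdlib Require Import Reals.
From mathcomp Require Import all_boot.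
Set Implicit Arguments. Unset Strict Implicit. Unset Printing Implicit Defensive.

(* A finite simple graph on vertex type T is given by a symmetric irreflexive
   relation e : rel T. *)

Definition interval_graph (T : finType) (e : rel T) : Prop :=
  exists (l r : T -> R),
    (forall v, Rle (l v) (r v)) /\
    (forall u v, u <> v ->
       (e u v <-> exists x : R, (Rle (l u) x /\ Rle x (r u)) /\ (Rle (l v) x /\ Rle x (r v)))).

Definition dominating (T : finType) (e : rel T) (D : {set T}) : bool :=
  [forall v, (v \in D) || [exists u in D, e u v]].

Definition ds_adjacent (T : finType) (D D' : {set T}) : bool :=
  #|(D :\: D') :|: (D' :\: D)| == 1.

Definition reconf (T : finType) (e : rel T) (k : nat) (Dp Dq : {set T}) : Prop :=
  exists s : seq {set T},
    [/\ path (@ds_adjacent T) Dp s, last Dp s = Dq &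
        all (fun D => dominating e D && (#|D| <= k)) (Dp :: s)].

Definition min_dominating (T : finType) (e : rel T) (D : {set T}) : Prop :=
  dominating e D /\ forall D' : {set T}, dominating e D' -> #|D| <= #|D'|.

Definition canonical_ds (T : finType) (e : rel T) (Ds : {set T}) : Prop :=
  min_dominating e Ds /\
  forall D : {set T}, dominating e D -> reconf e (#|D|.+1) D Ds.

(** Let u be the vertex not yet
    dominated by the greedy set S whose interval ends first, and let g be the
    closed neighbour of u whose interval ends last; the greedy algorithm adds
    g.  A dominating set D containing S but not g is walked to D + g - y,
    where y in D dominates u, through sets of sizes |D|+1 and |D| only.
    Induction on the number of vertices undominated by S then shows that the
    final greedy set is reachable from every dominating set D within the
    bound |D|+1 and has at most |D| vertices. *)

From Stdlib Require Import Reals Lra.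
From mathcomp Require Import all_boot all_order.
From mathcomp Require Import Rstruct.
Set Implicit Arguments. Unset Strict Implicit. Unset Printing Implicit Defensive.
Import Order.TTheory.

Section Domination.
Variables (T : finType) (e : rel T).

Definition closed_adj (u v : T) : bool := (u == v) || e u v.

Definition dominated_by (S : {set T}) (v : T) : bool :=
  [exists u in S, closed_adj u v].

Lemma dominatingP (D : {set T}) :
  reflect (forall v, dominated_by D v) (dominating e D).
Proof.
apply: (iffP forallP) => domD v.
- apply/existsP; case/orP: (domD v) => [vD | /existsP [u /andP [uD euv]]].
  + by exists v; rewrite vD /closed_adj eqxx.
  + by exists u; rewrite uD /closed_adj euv orbT.
- case/existsP: (domD v) => u /andP [uD /orP [/eqP <- | euv]]; first by rewrite uD.
  by apply/orP; right; apply/existsP; exists u; rewrite uD.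
Qed.

Lemma dominated_by_subset (S D : {set T}) v :
  S \subset D -> dominated_by S v -> dominated_by D v.
Proof.
move=> sSD /existsP [u /andP [uS adj_uv]]; apply/existsP; exists u.
by rewrite adj_uv (subsetP sSD).
Qed.

Lemma dominating_subset (S D : {set T}) :
  S \subset D -> dominating e S -> dominating e D.
Proof.
by move=> sSD /dominatingP domS; apply/dominatingP => v; apply: dominated_by_subset (domS v).
Qed.

Lemma ds_adjacentC (A B : {set T}) : ds_adjacent A B = ds_adjacent B A.
Proof. by rewrite /ds_adjacent setUC. Qed.

Lemma ds_adjacent_setU1 (A : {set T}) x : x \notin A -> ds_adjacent A (x |: A).
Proof.
move=> xA; rewrite /ds_adjacent (_ : _ :|: _ = [set x]) ?cards1 //.
apply/setP => z; rewrite !inE.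
by case: (z =P x) => [-> | _]; rewrite ?(negbTE xA); case: (z \in A).
Qed.

Lemma ds_adjacent_setD1 (A : {set T}) x : x \in A -> ds_adjacent A (A :\ x).
Proof.
move=> xA; rewrite ds_adjacentC -{2}(setD1K xA).
by apply: ds_adjacent_setU1; rewrite !inE eqxx.
Qed.

Lemma reconf_refl k (D : {set T}) :
  dominating e D -> #|D| <= k -> reconf e k D D.
Proof. by move=> domD leDk; exists [::]; rewrite /= domD leDk. Qed.

Lemma reconf_cons k (D D1 D2 : {set T}) :
  ds_adjacent D D1 -> dominating e D -> #|D| <= k ->
  reconf e k D1 D2 -> reconf e k D D2.
Proof.
move=> adjD domD leDk [s [pathD1 lastD1 allD1]].
by exists (D1 :: s); rewrite /= adjD domD leDk.
Qed.

Lemma reconf_subset k (S D : {set T}) :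
  S \subset D -> dominating e S -> #|D| <= k -> reconf e k D S.
Proof.
move=> + domS; have [n leDSn] := ubnP #|D :\: S|.
elim: n D leDSn => // n IH D; rewrite ltnS => leDSn sSD leDk.
have [/eqP | [x]] := set_0Vmem (D :\: S).
  rewrite setD_eq0 => sDS; have eqDS : D = S by apply/eqP; rewrite eqEsubset sDS.
  by rewrite eqDS in leDk *; apply: reconf_refl.
rewrite inE => /andP [xS xD].
apply: (reconf_cons (ds_adjacent_setD1 xD) (dominating_subset sSD domS) leDk).
apply: IH; last exact: leq_trans (subset_leq_card (subD1set D x)) leDk.
- rewrite (_ : _ :\: S = (D :\: S) :\ x); last by apply/setP => z; rewrite !inE andbCA.
  by apply: leq_trans leDSn; rewrite [#|D :\: S|](cardsD1 x) !inE xS xD.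
- apply/subsetP => z zS; rewrite !inE (subsetP sSD) // andbT.
  by apply: contraNneq xS => <-.
Qed.

Definition canonical_over (S G : {set T}) : Prop :=
  [/\ S \subset G, dominating e G &
      forall D, dominating e D -> S \subset D ->
        reconf e #|D|.+1 D G /\ #|G| <= #|D|].

Lemma canonical_over_refl (S : {set T}) : dominating e S -> canonical_over S S.
Proof.
move=> domS; split=> // D domD sSD.
by split; [exact: reconf_subset | exact: subset_leq_card].
Qed.

End Domination.

Section IntervalGreedy.
Variables (T : finType) (e : rel T) (l r : T -> R).
Hypothesis closed_adjE :
  forall u v, closed_adj e u v <-> Rle (l u) (r v) /\ Rle (l v) (r u).

Section Exchange.
Variables (S : {set T}) (u g : T).
Hypothesis u_undominated : ~~ dominated_by e S u.
Hypothesis u_first : forall w, ~~ dominated_by e S w -> Rle (r u) (r w).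
Hypothesis adj_gu : closed_adj e g u.
Hypothesis g_last : forall v, closed_adj e v u -> Rle (r v) (r g).

Lemma closed_adj_undominated_notin y : closed_adj e y u -> y \notin S.
Proof.
by move=> adj_yu; apply: contra u_undominated => yS; apply/existsP; exists y; rewrite yS.
Qed.

Lemma subset_exchange (D : {set T}) y :
  S \subset D -> g \notin D -> y \in D -> closed_adj e y u ->
  g |: S \subset (g |: D) :\ y.
Proof.
move=> sSD gD yD /closed_adj_undominated_notin yS.
have gy : g != y by apply: contraNneq gD => ->.
apply/subsetP => z; rewrite !inE => /predU1P [-> | zS]; first by rewrite gy eqxx.
by rewrite (subsetP sSD) ?orbT // andbT; apply: contraNneq yS => <-.
Qed.

(* A vertex w still undominated by S ends no earlier than u, so any interval
   meeting both u and w also meets g. *)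
Lemma dominating_exchange (D : {set T}) y :
  dominating e D -> S \subset D -> g \notin D -> y \in D -> closed_adj e y u ->
  dominating e ((g |: D) :\ y).
Proof.
move=> /dominatingP domD sSD gD yD adj_yu.
have /subUsetP [g_in sSD'] := subset_exchange sSD gD yD adj_yu.
apply/dominatingP => w; have /existsP [z /andP [zD adj_zw]] := domD w.
have [eq_zy | zy] := eqVneq z y; last first.
  by apply/existsP; exists z; rewrite adj_zw !inE zy zD orbT.
move: adj_zw; rewrite {}eq_zy => adj_yw.
have [/(dominated_by_subset sSD') // | w_undominated] := boolP (dominated_by e S w).
apply/existsP; exists g; rewrite -sub1set g_in /=.
move: adj_gu adj_yu adj_yw (u_first w_undominated) (g_last adj_yu).
move=> /closed_adjE [? ?] /closed_adjE [? ?] /closed_adjE [? ?] ? ?.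
by apply/closed_adjE; split; lra.
Qed.

Lemma canonical_over_greedy_step (G : {set T}) :
  canonical_over e (g |: S) G -> canonical_over e S G.
Proof.
case=> sgSG domG reachG; split=> // [|D domD sSD].
  by apply: subset_trans sgSG; apply: subsetUr.
have [gD | gD] := boolP (g \in D).
  by apply: reachG; rewrite // subUset sub1set gD.
have /dominatingP/(_ u)/existsP [y /andP [yD adj_yu]] := domD.
have ygD : y \in g |: D by rewrite !inE yD orbT.
have card_gD : #|g |: D| = #|D|.+1 by rewrite cardsU1 gD.
have card_gDy : #|(g |: D) :\ y| = #|D|.
  by apply/eq_add_S; rewrite -card_gD (cardsD1 y (g |: D)) ygD.
have [reach_gDy le_G] := reachG _ (dominating_exchange domD sSD gD yD adj_yu)
                                  (subset_exchange sSD gD yD adj_yu).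
rewrite card_gDy in reach_gDy le_G; split=> //.
apply: (reconf_cons (ds_adjacent_setU1 gD) domD (leqnSn _)).
apply: (reconf_cons (ds_adjacent_setD1 ygD) (dominating_subset (subsetUr _ D) domD)) => //.
by rewrite card_gD.
Qed.

End Exchange.

Lemma canonical_over_exists (S : {set T}) : exists G, canonical_over e S G.
Proof.
have [n] := ubnP #|[set w | ~~ dominated_by e S w]|.
elim: n S => // n IH S; rewrite ltnS => le_undom_n.
have [w0 w0_undom | all_dom] := pickP [pred w | ~~ dominated_by e S w]; last first.
  by exists S; apply/canonical_over_refl/dominatingP => w; apply/negbFE/all_dom.
have [u u_undom u_first] := arg_minP (P := [pred w | ~~ dominated_by e S w]) r w0_undom.
have adj_uu : closed_adj e u u by rewrite /closed_adj eqxx.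
have [g adj_gu g_last] := arg_maxP (P := closed_adj e ^~ u) r adj_uu.
have [G canG] : exists G, canonical_over e (g |: S) G.
  apply: IH; apply: leq_trans le_undom_n; apply: proper_card; apply/properP; split.
    apply/subsetP => w; rewrite !inE; apply: contra.
    exact/dominated_by_subset/subsetUr.
  exists u; rewrite !inE ?u_undom // negbK; apply/existsP; exists g.
  by rewrite adj_gu !inE eqxx.
exists G; apply: (canonical_over_greedy_step u_undom _ adj_gu _ canG).
- by move=> w /u_first /RleP.
- by move=> v /g_last /RleP.
Qed.

End IntervalGreedy.

Lemma interval_graph_closed_adj (T : finType) (e : rel T) : interval_graph e ->
  exists l r : T -> R,
    forall u v, closed_adj e u v <-> Rle (l u) (r v) /\ Rle (l v) (r u).
Proof.
case=> [l [r [lr meetE]]]; exists l, r => u v.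
have := lr u; have := lr v; rewrite /closed_adj.
have [<- | /eqP uv] := eqVneq u v; first by split => // _; split.
rewrite /= meetE //; split => [[x] | ]; first by split; lra.
(* the larger left endpoint lies in both intervals *)
case=> lu_rv lv_ru; exists (Rmax (l u) (l v)).
by rewrite /Rmax; case: Rle_dec => ?; split; split; lra.
Qed.

Theorem lemma11 (T : finType) (e : rel T) :
  symmetric e -> irreflexive e -> interval_graph e ->
  exists Ds : {set T}, canonical_ds e Ds.
Proof.
move=> _ _ /interval_graph_closed_adj [l [r closed_adjE]].
have [G [_ domG reachG]] := canonical_over_exists closed_adjE set0.
exists G; split.
- by split=> // D domD; case: (reachG D domD (sub0set D)).
- by move=> D domD; case: (reachG D domD (sub0set D)).
Qed.
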